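(* Let $\alpha\in(0,1]$, $0<\delta<\alpha$, and let $\mathcal{L}$ be the jump uncertainty set defined in the context. For each $\varphi\in C_b^3(\mathbb{R}^d)$ and all $x,x'\in\mathbb{R}^d$, $$\sup_{F_\mu\in\mathcal{L}}\int_{\mathbb{R}^d}\big|\delta^\alpha_\lambda\varphi(x')-\delta^\alpha_\lambda\varphi(x)\big|F_\mu(d\lambda)\le C_\alpha|x'-x|^\delta,$$ where $C_\alpha=\mathcal{K}_\alpha\big(4\|D\varphi\|_\infty^\delta\|\varphi\|_\infty^{1-\delta}+2\|D^3\varphi\|_\infty^\delta\|D^2\varphi\|_\infty^{1-\delta}\big)$ if $\alpha=1$ and $C_\alpha=\mathcal{K}_\alpha\big(4\|D\varphi\|_\infty^\delta\|\varphi\|_\infty^{1-\delta}+2\|D^2\varphi\|_\infty^\delta\|D\varphi\|_\infty^{1-\delta}\big)$ if $\alpha\in(0,1)$.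
   Context: For a symmetric finite measure $\mu$ on the unit sphere $S\subset\mathbb{R}^d$, $F_\mu(B)=\int_S\mu(dz)\int_0^\infty\mathbb{1}_B(rz)r^{-1-\alpha}dr$; given $\underline{\Lambda},\overline{\Lambda}>0$, $\mathcal{L}=\{F_\mu:\mu(S)\in(\underline{\Lambda},\overline{\Lambda})\}$. $\delta^\alpha_\lambda\varphi(x)=\varphi(x+\lambda)-\varphi(x)-\langle D\varphi(x),\lambda\mathbb{1}_{\{|\lambda|\le1\}}\rangle$ for $\alpha=1$ and $\varphi(x+\lambda)-\varphi(x)$ for $\alpha\in(0,1)$. $\mathcal{K}_1=\sup_{F_\mu\in\mathcal{L}}\int(|\lambda|^2\wedge1)F_\mu(d\lambda)$, and $\mathcal{K}_\alpha=\sup_{F_\mu\in\mathcal{L}}\int(|\lambda|\wedge1)F_\mu(d\lambda)$ for $\alpha\in(0,1)$ (these are finite). $C_b^3(\mathbb{R}^d)$: functions with uniformly bounded derivatives up to order 3; $\|\cdot\|_\infty$ is the sup norm. *)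

From HB Require Import structures.
From mathcomp Require Import all_boot all_order all_algebra.
From mathcomp Require Import all_classical all_reals all_analysis.
Set Implicit Arguments. Unset Strict Implicit. Unset Printing Implicit Defensive.
Import Order.TTheory GRing.Theory Num.Theory.
Import numFieldNormedType.Exports.
Local Open Scope classical_set_scope.
Local Open Scope ring_scope.

Section Defs.
Variables (R : realType) (d : nat).

(* points of R^d are row vectors (for differentiation) *)
Definition trow (t : d.-tuple R) : 'rV[R]_d := \row_(i < d) tnth t i.

Definition enorm (v : 'rV[R]_d) : R := Num.sqrt (\sum_(i < d) (v ord0 i) ^+ 2).

(* the unit sphere S, as a subset of the measurable space d.-tuple R
   (product = Borel sigma-algebra of R^d) *)
Definition sphere : set (d.-tuple R) := [set z | enorm (trow z) = 1].

Definition tscale (r : R) (z : d.-tuple R) : d.-tuple R := map_tuple (fun c => r * c) z.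
Definition tneg (z : d.-tuple R) : d.-tuple R := map_tuple (fun c => - c) z.

Definition Fmu (alpha : R) (mu : {measure set (d.-tuple R) -> \bar R})
    (B : set (d.-tuple R)) : \bar R :=
  (\int[mu]_(z in sphere)
     \int[lebesgue_measure]_(r in `]0%R, +oo[)
        ((\1_B (tscale r z) : R) * r `^ (- 1 - alpha))%:E)%E.

Definition in_L (alpha lo hi : R) (mu F : {measure set (d.-tuple R) -> \bar R}) : Prop :=
  [/\ mu (~` sphere) = 0%E,
      (forall A, measurable A -> mu (tneg @^-1` A) = mu A),
      (lo%:E < mu setT)%E, (mu setT < hi%:E)%E &
      (forall B, measurable B -> F B = Fmu alpha mu B)].

Definition Kalpha (alpha lo hi : R) : \bar R :=
  ereal_sup [set (\int[F]_l (if alpha == 1 then Num.min (enorm (trow l) ^+ 2) 1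
                             else Num.min (enorm (trow l)) 1)%:E)%E
            | F in [set F | exists mu, in_L alpha lo hi mu F]].

Fixpoint iterD (phi : 'rV[R]_d -> R) (vs : seq 'rV[R]_d) : 'rV[R]_d -> R :=
  match vs with
  | [::] => phi
  | v :: vs' => 'D_v (iterD phi vs')
  end.

Definition Cb3 (phi : 'rV[R]_d -> R) : Prop :=
  [/\ (forall x, differentiable phi x),
      (forall v x, differentiable ('D_v phi) x),
      (forall v w x, differentiable ('D_w ('D_v phi)) x),
      (forall u v w, continuous ('D_u ('D_w ('D_v phi)))) &
      (forall k, (k <= 3)%N -> exists M : R, forall x (vs : seq 'rV[R]_d),
          size vs = k -> all (fun v => enorm v <= 1) vs -> `|iterD phi vs x| <= M)].

Definition supD (k : nat) (phi : 'rV[R]_d -> R) : R :=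
  sup [set `|iterD phi vs x| | x in [set: 'rV[R]_d] &
       vs in [set vs : seq 'rV[R]_d | size vs = k /\ all (fun v => enorm v <= 1) vs]].

Definition deltaA (alpha : R) (phi : 'rV[R]_d -> R) (lam x : 'rV[R]_d) : R :=
  if alpha == 1 then phi (x + lam) - phi x - (if enorm lam <= 1 then 'D_lam phi x else 0)
  else phi (x + lam) - phi x.

Definition Calpha (alpha delta : R) (phi : 'rV[R]_d -> R) : R :=
  if alpha == 1 then
    4 * (supD 1 phi `^ delta * supD 0 phi `^ (1 - delta))
    + 2 * (supD 3 phi `^ delta * supD 2 phi `^ (1 - delta))
  else
    4 * (supD 1 phi `^ delta * supD 0 phi `^ (1 - delta))
    + 2 * (supD 2 phi `^ delta * supD 1 phi `^ (1 - delta)).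

End Defs.

From Pilot Require Import Defs.
From HB Require Import structures.
From mathcomp Require Import all_boot all_order all_algebra.
From mathcomp Require Import all_classical all_reals all_analysis.
From mathcomp Require Import ring lra measurable_realfun.
Set Implicit Arguments. Unset Strict Implicit. Unset Printing Implicit Defensive.
Import Order.TTheory GRing.Theory Num.Theory.
Import numFieldNormedType.Exports.
Local Open Scope classical_set_scope.
Local Open Scope ring_scope.

(* Write Δ(λ) = δ_λφ(x + h) - δ_λφ(x). Every such difference is a second
   difference of φ (or of its first-order Taylor remainder), which admits two
   bounds: a crude one by a multiple of the sup norm of some D^kφ, and one
   that is linear in |h|, obtained from the mean value theorem with D^(k+1)φ.
   Since min(A, B|h|) <= A^(1-δ) (B|h|)^δ, interpolation gives a Hölder bound
   in |h|. Taking k = 0 when |λ| > 1, and k = 1 (α < 1) or k = 2 (α = 1) when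
   |λ| <= 1, where each bound carries the factor |λ| resp. |λ|^2, yields
   |Δ(λ)| <= C_α |h|^δ min(|λ|^(1 or 2), 1); integrating against F_μ produces
   K_α. *)

Section real_estimates.
Variable R : realType.

Lemma MVT_le01 (g dg : R -> R) (B : R) :
  (forall t, is_derive t (1 : R) g (dg t)) ->
  (forall t, 0 <= t <= 1 -> `|dg t| <= B) -> `|g 1 - g 0| <= B.
Proof.
move=> g_dg dg_le.
have cg : {within `[0, 1], continuous g}.
  by apply: derivable_within_continuous => t _; have [] := g_dg t.
have [c c01 ->] := MVT (@ltr01 R) (fun t _ => g_dg t) cg.
rewrite subr0 mulr1; apply: dg_le.
by move: c01; rewrite in_itv /= => /andP[/ltW -> /ltW ->].
Qed.

Lemma is_derive_mulr_cst (c t : R) : is_derive t (1 : R) (fun s => s * c) c.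
Proof.
have -> : (fun s : R => s * c) = c \*: id by apply/funext => s; rewrite /= mulrC.
exact: is_derive_eq (is_deriveZ c (is_derive_id t 1)) (mulr1 c).
Qed.

Lemma min_le_powR_interp (a b e : R) : 0 <= a -> 0 <= b -> 0 <= e <= 1 ->
  Num.min a b <= b `^ e * a `^ (1 - e).
Proof.
move=> a0 b0 /andP[e0 e1].
have powR_split c : 0 < c -> c = c `^ e * c `^ (1 - e).
  by move=> c0; rewrite -powRD ?(gt_eqF c0) ?implybT // subrKC powRr1 // ltW.
have [->|an0] := eqVneq a 0; first by rewrite ge_min mulr_ge0 ?powR_ge0.
have [->|bn0] := eqVneq b 0; first by rewrite ge_min mulr_ge0 ?powR_ge0 ?orbT.
have a_gt0 : 0 < a by rewrite lt_def an0.
have b_gt0 : 0 < b by rewrite lt_def bn0.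
have [ab|ba] := leP a b.
  rewrite {1}(powR_split a) // ler_wpM2r ?powR_ge0 //.
  by apply: ge0_ler_powR; rewrite ?nnegrE.
rewrite {1}(powR_split b) // ler_wpM2l ?powR_ge0 //.
by apply: ge0_ler_powR; rewrite ?nnegrE ?subr_ge0 // ltW.
Qed.

Lemma le_interp (Q c A B t e : R) : 0 <= c -> 0 <= A -> 0 <= B -> 0 <= t ->
  0 <= e <= 1 -> Q <= c * A -> Q <= c * (B * t) ->
  Q <= c * (B `^ e * A `^ (1 - e)) * t `^ e.
Proof.
move=> c0 A0 B0 t0 e01 QA QBt.
apply: (le_trans (y := c * Num.min A (B * t))); first by rewrite minr_pMr // le_min QA.
rewrite -mulrA ler_wpM2l //.
apply: le_trans (min_le_powR_interp A0 (mulr_ge0 B0 t0) e01) _.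
by rewrite powRM // mulrAC.
Qed.

End real_estimates.

Section directional_increments.
Variables (R : realType) (V : normedModType R).
Implicit Types (f : V -> R) (x y h l v w : V).

Definition second_diff f x h l := f (x + h + l) - f (x + h) - (f (x + l) - f x).

Definition taylor_rem f y l := f (y + l) - f y - 'D_l f y.

Lemma is_derive_line f y v t : differentiable f (y + t *: v) ->
  is_derive t (1 : R) (fun s => f (y + s *: v)) ('D_v f (y + t *: v)).
Proof.
move=> df.
have E : (fun s : R => s^-1 *: (((fun r => f (y + r *: v)) \o shift t) (s *: 1) - f (y + t *: v)))
   = (fun s : R => s^-1 *: ((f \o shift (y + t *: v)) (s *: v) - f (y + t *: v))).
  apply/funext => s /=; congr (_ *: (f _ - _)).
  by rewrite [s%:A]mulr1 scalerDl addrCA addrC.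
apply: DeriveDef; first by rewrite /derivable E; exact: diff_derivable.
by rewrite /derive E.
Qed.

Lemma second_diffC f x h l : second_diff f x h l = second_diff f x l h.
Proof. by rewrite /second_diff [x + h + l]addrAC; ring. Qed.

Lemma second_diff_le_sup (M : R) f : (forall z, `|f z| <= M) ->
  forall x h l, `|second_diff f x h l| <= 4 * M.
Proof.
move=> f_le x h l; have -> : 4 * M = M + M + (M + M) by ring.
apply: le_trans (ler_normB _ _) _.
by apply: lerD; apply: le_trans (ler_normB _ _) _; apply: lerD.
Qed.

Variable N : V -> R.

Lemma increment_le (K : R) f : (forall z, differentiable f z) ->
  (forall a z, `|'D_a f z| <= K * N a) -> forall y v, `|f (y + v) - f y| <= K * N v.
Proof.
move=> df Df_le y v.
have := MVT_le01 (fun t => is_derive_line (df (y + t *: v))) (fun t _ => Df_le v _).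
by rewrite scale1r scale0r addr0.
Qed.

Lemma second_diff_le_mixed (K : R) f v : (forall z, differentiable f z) ->
  (forall z, differentiable ('D_v f) z) ->
  (forall a z, `|'D_a ('D_v f) z| <= K * N a) ->
  forall y w, `|second_diff f y w v| <= K * N w.
Proof.
move=> df dDf DDf_le y w.
have g_dg t : is_derive t (1 : R) (fun s => f (y + w + s *: v) - f (y + s *: v))
    ('D_v f (y + w + t *: v) - 'D_v f (y + t *: v)).
  exact: is_deriveB (is_derive_line (df _)) (is_derive_line (df _)).
have := MVT_le01 (B := K * N w) g_dg; rewrite !scale1r !scale0r !addr0.
have -> : f (y + w + v) - f (y + v) - (f (y + w) - f y) = second_diff f y w v.
  by rewrite /second_diff; ring.
apply=> t _; rewrite addrAC; exact: increment_le dDf DDf_le _ _.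
Qed.

Lemma second_diff_le_first (K : R) f : (forall z, differentiable f z) ->
  (forall a z, `|'D_a f z| <= K * N a) ->
  forall x h l, `|second_diff f x h l| <= 2 * (K * N l).
Proof.
move=> df Df_le x h l; rewrite mulr2n mulrDl mul1r.
exact: le_trans (ler_normB _ _) (lerD (increment_le df Df_le _ _) (increment_le df Df_le _ _)).
Qed.

Hypotheses (N_ge0 : forall v, 0 <= N v)
  (NZ : forall (k : R) v, N (k *: v) = `|k| * N v).

Lemma N_scale01_le (t : R) v : 0 <= t <= 1 -> N (t *: v) <= N v.
Proof.
by case/andP=> t0 t1; rewrite NZ ger0_norm // ler_piMl.
Qed.

Lemma taylor_rem_le (K : R) f l : 0 <= K -> (forall z, differentiable f z) ->
  (forall z, differentiable ('D_l f) z) ->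
  (forall a z, `|'D_a ('D_l f) z| <= K * N a) ->
  forall y, `|taylor_rem f y l| <= K * N l.
Proof.
move=> K_ge0 df dDf DDf_le y; set c := 'D_l f y.
have g_dg t : is_derive t (1 : R) (fun s => f (y + s *: l) - s * c)
    ('D_l f (y + t *: l) - c).
  exact: is_deriveB (is_derive_line (df _)) (is_derive_mulr_cst c t).
have := MVT_le01 (B := K * N l) g_dg.
rewrite !scale1r !scale0r !addr0 mul1r mul0r subr0.
have -> : f (y + l) - c - f y = taylor_rem f y l by rewrite /taylor_rem /c; ring.
apply=> t t01; move/le_trans: (increment_le dDf DDf_le y (t *: l)); apply.
by rewrite ler_wpM2l // N_scale01_le.
Qed.

Lemma taylor_rem_sub_le (K : R) f l : 0 <= K -> (forall z, differentiable f z) ->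
  (forall z, differentiable ('D_l f) z) ->
  (forall b z, differentiable ('D_b ('D_l f)) z) ->
  (forall a b z, `|'D_a ('D_b ('D_l f)) z| <= K * N a * N b) ->
  forall x h, `|taylor_rem f (x + h) l - taylor_rem f x l| <= K * N l * N h.
Proof.
move=> K_ge0 df dDf dDDf DDDf_le x h; set c := 'D_l f (x + h) - 'D_l f x.
have g_dg t : is_derive t (1 : R)
    (fun s => f (x + h + s *: l) - f (x + s *: l) - s * c)
    ('D_l f (x + h + t *: l) - 'D_l f (x + t *: l) - c).
  apply: is_deriveB (is_derive_mulr_cst c t).
  exact: is_deriveB (is_derive_line (df _)) (is_derive_line (df _)).
have := MVT_le01 (B := K * N l * N h) g_dg.
rewrite !scale1r !scale0r !addr0 mul1r mul0r subr0.
have -> : f (x + h + l) - f (x + l) - c - (f (x + h) - f x) =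
    taylor_rem f (x + h) l - taylor_rem f x l by rewrite /taylor_rem /c; ring.
apply=> t t01.
have DDDf_le' a z : `|'D_a ('D_(t *: l) ('D_l f)) z| <= (K * N (t *: l)) * N a.
  by rewrite mulrAC DDDf_le.
have -> : 'D_l f (x + h + t *: l) - 'D_l f (x + t *: l) - c =
    second_diff ('D_l f) x h (t *: l) by rewrite /second_diff /c; ring.
move/le_trans: (second_diff_le_mixed dDf (dDDf _) DDDf_le' x h); apply.
by rewrite ler_wpM2r // ler_wpM2l // N_scale01_le.
Qed.

End directional_increments.

Section euclidean_norm.
Variables (R : realType) (d : nat).
Local Notation V := 'rV[R]_d.

Lemma enorm_ge0 (v : V) : 0 <= enorm v.
Proof. exact: sqrtr_ge0. Qed.

Lemma enormZ (k : R) (v : V) : enorm (k *: v) = `|k| * enorm v.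
Proof.
rewrite /enorm -sqrtr_sqr -sqrtrM ?sqr_ge0 // mulr_sumr; congr Num.sqrt.
by apply: eq_bigr => i _; rewrite mxE exprMn.
Qed.

Lemma enorm0_eq0 (v : V) : enorm v = 0 -> v = 0.
Proof.
move=> /eqP; rewrite /enorm sqrtr_eq0 => sum_le0.
have sum_eq0 : \sum_(i < d) v ord0 i ^+ 2 = 0.
  by apply/eqP; rewrite eq_le sum_le0 sumr_ge0 // => i _; rewrite sqr_ge0.
apply/rowP => i; rewrite mxE.
move/eqP: sum_eq0; rewrite psumr_eq0 => [/allP/(_ i)|i' _]; last by rewrite sqr_ge0.
by rewrite mem_index_enum sqrf_eq0 => /(_ isT) /eqP.
Qed.

(* direction 0 = 0, as 0^-1 = 0. *)
Definition direction (a : V) : V := (enorm a)^-1 *: a.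

Lemma enorm_direction_le1 (a : V) : enorm (direction a) <= 1.
Proof.
rewrite /direction enormZ ger0_norm ?invr_ge0 ?enorm_ge0 //.
by have [->|a_neq0] := eqVneq (enorm a) 0; rewrite ?mulr0 ?mulVf.
Qed.

Lemma derive_direction (g : V -> R) (z a : V) : differentiable g z ->
  'D_a g z = enorm a * 'D_(direction a) g z.
Proof.
move=> dg; rewrite !deriveE // -linearZ /= /direction scalerA.
have [a0|a_neq0] := eqVneq (enorm a) 0; last by rewrite divff ?scale1r.
by rewrite (enorm0_eq0 a0) scaler0.
Qed.

Lemma derive_mulr_cst (g : V -> R) (k : R) (a : V) : (forall z, differentiable g z) ->
  'D_a (fun z => k * g z) = (fun z => k * 'D_a g z).
Proof. by move=> dg; apply/funext => z; exact: deriveZ (diff_derivable (dg z)). Qed.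

Lemma iterD_direction (phi : V -> R) (vs : seq V) :
  (forall ws, (size ws < size vs)%N -> forall z, differentiable (Defs.iterD phi ws) z) ->
  Defs.iterD phi vs = (fun z => \prod_(v <- vs) enorm v * Defs.iterD phi (map direction vs) z).
Proof.
elim: vs => [|v vs IH] dphi /=; first by apply/funext => z; rewrite big_nil mul1r.
have dphi_map z : differentiable (Defs.iterD phi (map direction vs)) z.
  by apply: dphi; rewrite size_map.
rewrite IH => [|ws ws_lt]; last by apply: dphi; exact: ltnW.
rewrite derive_mulr_cst //; apply/funext => z.
by rewrite derive_direction // big_cons mulrCA mulrA.
Qed.

Definition jump_weight (alpha : R) (l : V) : R :=
  if alpha == 1 then Num.min (enorm l ^+ 2) 1 else Num.min (enorm l) 1.

Lemma jump_weight_ge0 alpha l : 0 <= jump_weight alpha l.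
Proof. by rewrite /jump_weight; case: ifP => _; rewrite le_min ?sqr_ge0 ?enorm_ge0 ?ler01. Qed.

End euclidean_norm.

Section Cb3_bounds.
Variables (R : realType) (d : nat) (phi : 'rV[R]_d -> R).
Hypothesis phi_Cb3 : Cb3 phi.
Local Notation V := 'rV[R]_d.

Let dphi : forall z, differentiable phi z. Proof. by case: phi_Cb3. Qed.
Let dDphi : forall v z, differentiable ('D_v phi) z. Proof. by case: phi_Cb3. Qed.
Let dDDphi : forall v w z, differentiable ('D_w ('D_v phi)) z. Proof. by case: phi_Cb3. Qed.

Lemma Cb3_iterD_differentiable (ws : seq V) : (size ws < 3)%N ->
  forall z, differentiable (Defs.iterD phi ws) z.
Proof. by case: ws => [|w [|v [|? ?]]] //=. Qed.

Lemma iterD_le_supD (vs : seq V) z : (size vs <= 3)%N ->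
  all (fun v => enorm v <= 1) vs -> `|Defs.iterD phi vs z| <= supD (size vs) phi.
Proof.
move=> vs_le3 vs_unit; case: phi_Cb3 => _ _ _ _ /(_ _ vs_le3) [M M_ub].
apply: ub_le_sup; last by exists z => //; exists vs.
by exists M => _ [y _ [ws [ws_size ws_unit] <-]]; exact: M_ub.
Qed.

Lemma supD_ge0 k : (k <= 3)%N -> 0 <= supD k phi.
Proof.
move=> k_le3; have zero_unit : all (fun v : V => enorm v <= 1) (nseq k 0).
  apply/allP => v /nseqP [-> _].
  by rewrite /enorm big1 ?sqrtr0 // => i _; rewrite mxE expr0n.
have := iterD_le_supD (vs := nseq k 0) 0; rewrite size_nseq => /(_ k_le3 zero_unit).
exact: le_trans.
Qed.

Lemma iterD_le (vs : seq V) z : (size vs <= 3)%N ->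
  `|Defs.iterD phi vs z| <= supD (size vs) phi * \prod_(v <- vs) enorm v.
Proof.
move=> vs_le3; rewrite iterD_direction => [|ws ws_lt]; last first.
  exact: Cb3_iterD_differentiable (leq_trans ws_lt vs_le3).
have prod_ge0 : 0 <= \prod_(v <- vs) enorm v.
  by apply: prodr_ge0 => v _; exact: enorm_ge0.
rewrite normrM (ger0_norm prod_ge0) mulrC ler_wpM2r //.
rewrite -(size_map (@direction _ _)); apply: iterD_le_supD; first by rewrite size_map.
by apply/allP => _ /mapP[v _ ->]; exact: enorm_direction_le1.
Qed.

Lemma norm_phi_le z : `|phi z| <= supD 0 phi.
Proof. exact: (iterD_le_supD (vs := [::]) z isT isT). Qed.

Lemma norm_derive_le a z : `|'D_a phi z| <= supD 1 phi * enorm a.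
Proof. by have /= := iterD_le (vs := [:: a]) z isT; rewrite big_seq1. Qed.

Lemma norm_derive2_le l a z : `|'D_a ('D_l phi) z| <= supD 2 phi * enorm l * enorm a.
Proof.
have /= := iterD_le (vs := [:: a; l]) z isT.
by rewrite !big_cons big_nil mulr1 [enorm a * _]mulrC mulrA.
Qed.

Lemma norm_derive3_le l a b z :
  `|'D_a ('D_b ('D_l phi)) z| <= supD 3 phi * enorm l * enorm a * enorm b.
Proof.
have /= := iterD_le (vs := [:: a; b; l]) z isT.
have -> : \prod_(v <- [:: a; b; l]) enorm v = enorm l * enorm a * enorm b.
  by rewrite !big_cons big_nil; ring.
by rewrite !mulrA.
Qed.

Variable delta : R.
Hypothesis delta01 : 0 <= delta <= 1.

Lemma second_diff_far x h l :
  `|second_diff phi x h l| <=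
    4 * (supD 1 phi `^ delta * supD 0 phi `^ (1 - delta)) * enorm h `^ delta.
Proof.
apply: le_interp; rewrite ?supD_ge0 ?enorm_ge0 //.
  exact: second_diff_le_sup norm_phi_le _ _ _.
rewrite second_diffC; apply: le_trans (second_diff_le_first dphi norm_derive_le _ _ _) _.
by rewrite ler_wpM2r ?mulr_ge0 ?supD_ge0 ?enorm_ge0 // ler_nat.
Qed.

Lemma second_diff_near x h l :
  `|second_diff phi x h l| <=
    2 * (supD 2 phi `^ delta * supD 1 phi `^ (1 - delta)) * enorm h `^ delta * enorm l.
Proof.
rewrite mulrAC -[2 * _ * _]mulrAC.
apply: le_interp; rewrite ?mulr_ge0 ?supD_ge0 ?enorm_ge0 //.
  by apply: le_trans (second_diff_le_first dphi norm_derive_le _ _ _) _; rewrite mulrAC mulrA.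
apply: le_trans (second_diff_le_mixed dphi (dDphi l) (norm_derive2_le l) x h) _.
have -> : supD 2 phi * enorm l * enorm h = 1 * enorm l * (supD 2 phi * enorm h) by ring.
by rewrite !ler_wpM2r ?mulr_ge0 ?supD_ge0 ?enorm_ge0 //; lra.
Qed.

Lemma taylor_rem_sub_near x h l :
  `|taylor_rem phi (x + h) l - taylor_rem phi x l| <=
    2 * (supD 3 phi `^ delta * supD 2 phi `^ (1 - delta)) * enorm h `^ delta
      * enorm l ^+ 2.
Proof.
have Sl_ge0 k : (k <= 3)%N -> 0 <= supD k phi * enorm l.
  by move=> k_le3; rewrite mulr_ge0 ?supD_ge0 ?enorm_ge0.
rewrite mulrAC -[2 * _ * _]mulrAC.
apply: le_interp; rewrite ?mulr_ge0 ?sqr_ge0 ?supD_ge0 ?enorm_ge0 //.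
  have tr_le y := taylor_rem_le (@enorm_ge0 R d) (@enormZ R d) (Sl_ge0 2 isT)
    dphi (dDphi l) (norm_derive2_le l) y.
  have -> : 2 * enorm l ^+ 2 * supD 2 phi =
    supD 2 phi * enorm l * enorm l + supD 2 phi * enorm l * enorm l by ring.
  exact: le_trans (ler_normB _ _) (lerD (tr_le _) (tr_le _)).
apply: le_trans (taylor_rem_sub_le (@enorm_ge0 R d) (@enormZ R d) (Sl_ge0 3 isT)
  dphi (dDphi l) (dDDphi l) (norm_derive3_le l) x h) _.
have -> : supD 3 phi * enorm l * enorm l * enorm h =
  1 * enorm l ^+ 2 * (supD 3 phi * enorm h) by ring.
by rewrite !ler_wpM2r ?mulr_ge0 ?sqr_ge0 ?supD_ge0 ?enorm_ge0 //; lra.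
Qed.

Lemma Calpha_ge0 alpha : 0 <= Calpha alpha delta phi.
Proof. by rewrite /Calpha; case: ifP; rewrite ?(addr_ge0, mulr_ge0, powR_ge0). Qed.

Lemma deltaA_increment_le alpha x h l :
  `|deltaA alpha phi l (x + h) - deltaA alpha phi l x| <=
    Calpha alpha delta phi * enorm h `^ delta * jump_weight alpha l.
Proof.
have T_ge0 := powR_ge0 (enorm h) delta.
have X_ge0 k : 0 <= supD k.+1 phi `^ delta * supD k phi `^ (1 - delta).
  by rewrite mulr_ge0 ?powR_ge0.
rewrite /deltaA /Calpha /jump_weight; case: ifP => _;
  have [l_le1|l_gt1] := leP (enorm l) 1.
- rewrite min_l ?expr_le1 ?enorm_ge0 //.
  move/le_trans: (taylor_rem_sub_near x h l); apply.
  by rewrite !ler_wpM2r ?sqr_ge0 // lerDr mulr_ge0.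
- have l2_gt1 : 1 < enorm l ^+ 2 by rewrite expr_gt1 ?enorm_ge0.
  rewrite (min_r (ltW l2_gt1)) !subr0 mulr1; move/le_trans: (second_diff_far x h l); apply.
  by rewrite ler_wpM2r // lerDl mulr_ge0.
- move/le_trans: (second_diff_near x h l); apply.
  by rewrite !ler_wpM2r ?enorm_ge0 // lerDr mulr_ge0.
- rewrite mulr1; move/le_trans: (second_diff_far x h l); apply.
  by rewrite ler_wpM2r // lerDl mulr_ge0.
Qed.

End Cb3_bounds.

Lemma ge0_le_integralT d' (T : measurableType d') (R : realType)
    (mu : {measure set T -> \bar R}) (f g : T -> \bar R) :
  (forall x, (0 <= f x)%E) -> (forall x, (f x <= g x)%E) ->
  (\int[mu]_x f x <= \int[mu]_x g x)%E.
Proof.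
move=> f_ge0 fg; have g_ge0 x : (0 <= g x)%E by exact: le_trans (f_ge0 x) (fg x).
rewrite !ge0_integralTE //; apply: ereal_sup_le => _ [h h_le <-].
by exists h => //= x; exact: le_trans (h_le x) (fg x).
Qed.

Lemma measurable_jump_weight (R : realType) (d : nat) (alpha : R) :
  measurable_fun setT (fun l : d.-tuple R => jump_weight alpha (trow l)).
Proof.
have m_enorm : measurable_fun setT (fun l : d.-tuple R => enorm (trow l)).
  have -> : (fun l : d.-tuple R => enorm (trow l)) =
      (fun l => Num.sqrt (\sum_(i <- index_enum 'I_d) tnth l i ^+ 2)).
    by apply/funext => l; rewrite /enorm; congr Num.sqrt; apply: eq_bigr => i _; rewrite mxE.
  apply: measurableT_comp; first exact: continuous_measurable_fun (@sqrt_continuous R).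
  by apply: measurable_sum => i; apply: measurable_funX; exact: measurable_tnth.
by rewrite /jump_weight; case: (alpha == 1); apply: measurable_minr => //; exact: measurable_funX.
Qed.

Theorem lemma4p3 (R : realType) (d : nat) (alpha delta lo hi : R)
  (halpha : 0 < alpha <= 1) (hdelta : 0 < delta < alpha)
  (hlo : 0 < lo) (hhi : 0 < hi)
  (phi : 'rV[R]_d -> R) (hphi : Cb3 phi) (x x' : 'rV[R]_d) :
  (ereal_sup [set (\int[F]_l `|deltaA alpha phi (trow l) x' - deltaA alpha phi (trow l) x|%:E)%E
             | F in [set F | exists mu, in_L alpha lo hi mu F]]
   <= Kalpha d alpha lo hi * (Calpha alpha delta phi * enorm (x' - x) `^ delta)%:E)%E.
Proof.
have delta01 : 0 <= delta <= 1.
  case/andP: hdelta => delta_gt0 delta_lt; case/andP: halpha => _ alpha_le1.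
  by rewrite ltW //= ltW // (lt_le_trans delta_lt alpha_le1).
set c := Calpha alpha delta phi * enorm (x' - x) `^ delta.
have c_ge0 : 0 <= c by rewrite mulr_ge0 ?powR_ge0 ?Calpha_ge0.
apply: ge_ereal_sup => _ [F F_L <-].
apply: (@le_trans _ _ (\int[F]_l (c%:E * (jump_weight alpha (trow l))%:E))%E).
  apply: ge0_le_integralT => l; first by rewrite lee_fin.
  rewrite -EFinM lee_fin.
  by have := deltaA_increment_le hphi delta01 alpha x (x' - x) (trow l); rewrite subrKC.
rewrite ge0_integralZl_EFin //; last 2 first.
- by move=> l _; rewrite lee_fin jump_weight_ge0.
- by apply/measurable_EFinP; exact: measurable_jump_weight.
by rewrite muleC lee_wpmul2r ?lee_fin //; apply: ereal_sup_ubound; exists F.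
Qed.
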